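(* Let $T>0$, $N=2$, $1<M<2$. Consider minimizing $\mathbb V(T)=\frac12(\xi_1(T)^2+\xi_2(T)^2)$ over $\alpha\in\mathcal U_M$, where $\dot\xi_i=-\xi_i+(1-\alpha_i)\bar\xi$, $\bar\xi=\frac12(\xi_1+\xi_2)$, with $\bar\xi(0)>0$ and $\xi_1(0)>\xi_2(0)$. Let $\alpha$ be an optimal control whose trajectory satisfies $\xi_1(t)\ge\xi_2(t)$ for all $t$, and let $(\lambda_1,\lambda_2)$ be the corresponding covectors given by the Pontryagin maximum principle: $$\dot\lambda_1=\tfrac{1+\alpha_1}{2}\lambda_1-\tfrac{1-\alpha_2}{2}\lambda_2,\quad \dot\lambda_2=\tfrac{1+\alpha_2}{2}\lambda_2-\tfrac{1-\alpha_1}{2}\lambda_1,\quad \lambda(T)=(\xi_1(T),\xi_2(T)),$$ and for almost every $t$, $\alpha(t)$ minimizes $a\mapsto-\bar\xi(t)(a_1\lambda_1(t)+a_2\lambda_2(t))$ over $a\in[0,1]^2$, $a_1+a_2\le M$. Then: (i) if $\lambda_2(T)>0$, then $\lambda_1(t)>0$ and $\lambda_2(t)>0$ for all $t\in[0,T]$; (ii) if $\lambda_2(T)=0$, then $\lambda_1(t)>0$ and $\lambda_2(t)=0$ for all $t\in[0,T]$; (iii) if $\lambda_2(T)<0$, then $\lambda_2(t)<0$ for all $t\in[0,T]$.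
   Context: $\mathcal U_M$ is the set of measurable $\alpha:[0,T]\to[0,1]^2$ with $\alpha_1+\alpha_2\le M$. *)

From HB Require Import structures.
From mathcomp Require Import all_boot all_order all_algebra.
From mathcomp Require Import all_classical all_reals all_analysis.
Set Implicit Arguments. Unset Strict Implicit. Unset Printing Implicit Defensive.
Import Order.TTheory GRing.Theory Num.Theory.
Local Open Scope classical_set_scope.
Local Open Scope ring_scope.

Section Defs.
Variable R : realType.
Local Notation mu := (@lebesgue_measure R).

(* f is absolutely continuous on [0,T] with a.e. derivative g, in integral
   (Caratheodory) form: g is Lebesgue-integrable on [0,T] and
   f t = f 0 + \int_[0,t] g for all t in [0,T]. *)
Definition ode_sol (T : R) (f g : R -> R) : Prop :=
  mu.-integrable `[0, T] (EFin \o g) /\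
  forall t, 0 <= t <= T -> f t = f 0 + Rintegral mu `[0, t] g.

Definition admissible (T M : R) (a1 a2 : R -> R) : Prop :=
  measurable_fun `[0, T] a1 /\ measurable_fun `[0, T] a2 /\
  forall t, 0 <= t <= T ->
    [/\ 0 <= a1 t <= 1, 0 <= a2 t <= 1 & a1 t + a2 t <= M].

Definition xibar (x1 x2 : R -> R) (t : R) : R := (x1 t + x2 t) / 2.

Definition trajectory (T : R) (a1 a2 : R -> R) (x10 x20 : R)
    (x1 x2 : R -> R) : Prop :=
  x1 0 = x10 /\ x2 0 = x20 /\
  ode_sol T x1 (fun s => - x1 s + (1 - a1 s) * xibar x1 x2 s) /\
  ode_sol T x2 (fun s => - x2 s + (1 - a2 s) * xibar x1 x2 s).

Definition cost (T : R) (x1 x2 : R -> R) : R :=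
  (x1 T ^+ 2 + x2 T ^+ 2) / 2.

Definition optimal (T M x10 x20 : R) (a1 a2 x1 x2 : R -> R) : Prop :=
  admissible T M a1 a2 /\ trajectory T a1 a2 x10 x20 x1 x2 /\
  forall b1 b2 y1 y2 : R -> R,
    admissible T M b1 b2 -> trajectory T b1 b2 x10 x20 y1 y2 ->
    cost T x1 x2 <= cost T y1 y2.

Definition pmp_covector (T M : R) (a1 a2 x1 x2 l1 l2 : R -> R) : Prop :=
  ode_sol T l1 (fun s => (1 + a1 s) / 2 * l1 s - (1 - a2 s) / 2 * l2 s) /\
  ode_sol T l2 (fun s => (1 + a2 s) / 2 * l2 s - (1 - a1 s) / 2 * l1 s) /\
  l1 T = x1 T /\ l2 T = x2 T /\
  {ae mu, forall t, 0 <= t <= T ->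
     forall b1 b2 : R, 0 <= b1 <= 1 -> 0 <= b2 <= 1 -> b1 + b2 <= M ->
       - xibar x1 x2 t * (a1 t * l1 t + a2 t * l2 t)
         <= - xibar x1 x2 t * (b1 * l1 t + b2 * l2 t)}.

End Defs.

From HB Require Import structures.
From mathcomp Require Import all_boot all_order all_algebra.
From mathcomp Require Import all_classical all_reals all_analysis.
From mathcomp Require Import ring lra.
Set Implicit Arguments. Unset Strict Implicit. Unset Printing Implicit Defensive.
Import Order.TTheory GRing.Theory Num.Theory numFieldNormedType.Exports.
Local Open Scope ring_scope.

(* Every quantity in the proof solves a linear equation y' = r y with a
   bounded rate |r| <= K, and such a y either vanishes identically or keeps
   a constant sign (a Gronwall-type uniqueness argument).  This applies to
   the mean state, whose rate is -(a1 + a2)/2 and which starts positive; to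
   the gap l1 - l2, which solves y' = y and ends at x1(T) - x2(T) >= 0; and,
   once l2 <= l1 and the mean state is positive, to l2 itself: maximality of
   (a1, a2) against the competitors (1, a2) and (1, M - 1) gives
   (1 - a1) l1 <= |l2|, so the right-hand side of the l2 equation is bounded
   by 2 |l2|. *)

Section LinearGrowth.
Variable R : realType.
Local Open Scope classical_set_scope.
Local Notation mu := (@lebesgue_measure R).

Lemma ae_impl (P Q : R -> Prop) : (forall x, P x -> Q x) ->
  {ae mu, forall x, P x} -> {ae mu, forall x, Q x}.
Proof. by move=> PQ; apply: negligibleS => x nQx /PQ. Qed.

Lemma ode_sol_continuous (T : R) f g : 0 <= T -> ode_sol T f g ->
  {within `[0, T], continuous f}.
Proof.
move=> T0 [ig hf].
have cI := parameterized_integral_continuous T0 ig.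
have cF : {within `[0, T], continuous
    (fun x => f 0 + parameterized_integral mu 0 x g)}.
  move=> x; apply: cvgD; first exact: cvg_cst.
  exact: (cI x).
apply: (subspace_eq_continuous _ cF) => x.
by rewrite inE /= in_itv /= => /andP[x0 xT]; rewrite /= [RHS]hf ?x0 ?xT.
Qed.

Lemma eq_ode_sol (T : R) f g f' g' : (forall t, f t = f' t) ->
  (forall t, g t = g' t) -> ode_sol T f g -> ode_sol T f' g'.
Proof.
move=> ef eg [i h]; split.
  by apply: (eq_integrable _ _ _ _ i) => // x _ /=; rewrite eg.
move=> t ht; rewrite -!ef h //; congr (_ + _).
by apply: eq_Rintegral => x _; exact: eg.
Qed.

Lemma ode_sol_lincomb (T c1 c2 : R) f1 g1 f2 g2 :
  ode_sol T f1 g1 -> ode_sol T f2 g2 ->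
  ode_sol T (fun s => c1 * f1 s + c2 * f2 s) (fun s => c1 * g1 s + c2 * g2 s).
Proof.
move=> [i1 h1] [i2 h2]; split.
  exact: (eq_integrable _ _ _ _
    (integrableD _ (integrableZl _ c1 i1) (integrableZl _ c2 i2))).
move=> t /andP[t0 tT].
have sub : `[0, t] `<=` `[0, T] by apply: subset_itvl; rewrite bnd_simp.
have j1 : mu.-integrable `[0, t] (EFin \o g1) by apply: integrableS i1.
have j2 : mu.-integrable `[0, t] (EFin \o g2) by apply: integrableS i2.
rewrite (h1 t) ?t0 ?tT // (h2 t) ?t0 ?tT // RintegralD //.
- by rewrite !RintegralZl //; ring.
- exact: (integrableZl _ c1 j1).
- exact: (integrableZl _ c2 j2).
Qed.

Lemma IVT_sign_change (T : R) (f : R -> R) a b :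
  {within `[0, T], continuous f} -> 0 <= a <= T -> 0 <= b <= T ->
  f a * f b <= 0 -> exists2 c, 0 <= c <= T & f c = 0.
Proof.
move=> cf /andP[a0 aT] /andP[b0 bT] fab.
wlog ab : a b a0 aT b0 bT fab / a <= b.
  move=> W; have [ab|/ltW ba] := leP a b; first exact: (W a b).
  by apply: (W b a) => //; rewrite mulrC.
have sub : `[a, b] `<=` `[0, T].
  by move=> x; rewrite /= !in_itv /= => /andP[ax xb];
    rewrite (le_trans a0 ax) (le_trans xb bT).
have f0 : Num.min (f a) (f b) <= 0 <= Num.max (f a) (f b).
  rewrite ge_min le_max; apply/andP; split.
    by have [//|fa] := lerP (f a) 0; apply/orP; right; nra.
  by have [//|fa] := lerP 0 (f a); apply/orP; right; nra.
have [c /[!in_itv]/= /andP[ac cb] fc] := IVT ab (continuous_subspaceW sub cf) f0.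
by exists c; rewrite ?(le_trans a0 ac) ?(le_trans cb bT).
Qed.

Variables (T K : R) (f g : R -> R).
Hypotheses (K_ge0 : 0 <= K) (f_ode : ode_sol T f g).
Hypothesis rate_bound : {ae mu, forall s, 0 <= s <= T -> `|g s| <= K * `|f s|}.

Lemma ode_sol_increment_le (B u v : R) : 0 <= u -> u <= v -> v <= T ->
  (forall s, u <= s <= v -> `|f s| <= B) -> `|f v - f u| <= K * B * (v - u).
Proof.
move=> u0 uv vT hB; have [ig hf] := f_ode.
have B0 : 0 <= B by apply: le_trans (hB u _); rewrite ?lexx ?uv.
rewrite (hf v) ?(le_trans u0 uv) ?vT // (hf u) ?u0 ?(le_trans uv vT) //.
rewrite opprD addrACA subrr add0r.
have igv : mu.-integrable `[0, v] (EFin \o g).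
  by apply: integrableS ig => //; apply: subset_itvl; rewrite bnd_simp.
rewrite (@Rintegral_itvB _ g (BLeft 0) (BRight v) u) ?bnd_simp //.
have iuv : mu.-integrable `]u, v] (EFin \o g).
  by apply: integrableS igv => //; apply: subset_itvr; rewrite bnd_simp.
apply: le_trans (le_normr_Rintegral _ _) _ => //.
rewrite -lee_fin /Rintegral fineK; last first.
  rewrite ge0_fin_numE; last exact: integral_ge0.
  by move/integrableP: iuv => [_].
have gB : \forall x \ae mu, `]u, v] x -> (`|(EFin \o g) x| <= (K * B)%:E)%E.
  apply: ae_impl rate_bound => x hx; rewrite /= in_itv /= => /andP[ux xv].
  rewrite lee_fin (le_trans (hx _)) ?(le_trans u0 (ltW ux)) ?(le_trans xv vT) //.
  by rewrite ler_wpM2l // hB // (ltW ux) xv.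
have KB0 : (0 <= (K * B)%:E)%E by rewrite lee_fin mulr_ge0.
have mu_uv : mu `]u, v] = (v - u)%:E.
  rewrite lebesgue_measure_itv /= lte_fin.
  case: ltP => [_|vu]; first by rewrite EFinB.
  by rewrite (@le_anti _ _ v u) ?uv ?vu // subrr.
move: (@integral_le_bound _ _ _ mu _ _ _ (measurable_itv _)
  (measurable_int mu iuv) KB0 gB).
move=> /le_trans; apply; rewrite [X in (_ <= X)%E]EFinM -mu_uv; exact: lexx.
Qed.

Lemma ode_sol_zero_near t1 : 0 <= t1 <= T -> f t1 = 0 ->
  forall t, 0 <= t <= T -> `|t - t1| <= (2 * K + 2)^-1 -> f t = 0.
Proof.
move=> /andP[t10 t1T] ft1 t /andP[t0 tT] tt1.
set h := (2 * K + 2)^-1 in tt1.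
have h0 : 0 < h by rewrite invr_gt0 ltr_wpDl // mulr_ge0.
have Kh : K * h <= 2^-1.
  have hK : h * (2 * K + 2) = 1.
    by rewrite mulVf // gt_eqF // ltr_wpDl // mulr_ge0.
  have e : 2 * (K * h) = h * (2 * K + 2) - 2 * h by ring.
  by rewrite hK in e; lra.
set lo := Num.max 0 (t1 - h); set hi := Num.min T (t1 + h).
have lohi : lo <= hi.
  by rewrite ge_max !le_min; apply/andP; split; apply/andP; split; lra.
have sub : `[lo, hi] `<=` `[0, T].
  move=> x; rewrite /= !in_itv /= => /andP[lx xh]; apply/andP; split.
    by apply: le_trans lx; rewrite le_max lexx.
  by apply: le_trans xh _; rewrite ge_min lexx.
have cf := continuous_subspaceW sub (ode_sol_continuous (le_trans t10 t1T) f_ode).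
have cnf : {within `[lo, hi], continuous (fun x => `|f x|)}.
  by move=> x; apply: cvg_norm; exact: cf.
have [c /[!in_itv] /= /andP[loc chi] cmax] := EVT_max lohi cnf.
have fc_max s : lo <= s <= hi -> `|f s| <= `|f c|.
  by move=> hs; apply: cmax; rewrite in_itv.
have c0 : 0 <= c by apply: le_trans loc; rewrite le_max lexx.
have cT : c <= T by apply: le_trans chi _; rewrite ge_min lexx.
(* the maximum of |f| on [lo, hi] is at most K h <= 1/2 times itself *)
have fc_self : `|f c| <= K * `|f c| * h.
  have [t1c|ct1] := leP t1 c.
    have := ode_sol_increment_le t10 t1c cT (B := `|f c|).
    rewrite ft1 subr0 => /(_ _) /le_trans; apply.
      move=> s /andP[t1s sc]; apply: fc_max; rewrite (le_trans sc chi) andbT.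
      by apply: le_trans t1s; rewrite ge_max t10 /=; lra.
    by rewrite ler_wpM2l ?mulr_ge0 //; move: chi; rewrite le_min => /andP[_]; lra.
  have := ode_sol_increment_le c0 (ltW ct1) t1T (B := `|f c|).
  rewrite ft1 sub0r normrN => /(_ _) /le_trans; apply.
    move=> s /andP[cs st1]; apply: fc_max; rewrite (le_trans loc cs) /=.
    by apply: le_trans st1 _; rewrite le_min t1T /=; lra.
  by rewrite ler_wpM2l ?mulr_ge0 //; move: loc; rewrite ge_max => /andP[_]; lra.
have fc0 : `|f c| = 0.
  have n0 := normr_ge0 (f c).
  have : `|f c| <= `|f c| * (K * h) by rewrite mulrA (mulrC _ K).
  by move=> ?; apply/eqP; rewrite eq_le n0 andbT; nra.
apply/normr0_eq0/eqP; rewrite eq_le normr_ge0 andbT -fc0 fc_max //.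
move: tt1; rewrite ler_norml => /andP[? ?].
by rewrite ge_max le_min t0 tT /=; apply/andP; split; lra.
Qed.

Lemma ode_sol_zero t0 : 0 <= t0 <= T -> f t0 = 0 ->
  forall t, 0 <= t <= T -> f t = 0.
Proof.
move=> /andP[t00 t0T] ft0.
set h := (2 * K + 2)^-1.
have h0 : 0 < h by rewrite invr_gt0 ltr_wpDl // mulr_ge0.
suff zero_within n t : 0 <= t <= T -> `|t - t0| <= n%:R * h -> f t = 0.
  move=> t /andP[t0' tT]; apply: (zero_within (Num.bound (T / h))); first lra.
  have /ltW := archi_boundP (divr_ge0 (le_trans t00 t0T) (ltW h0)).
  rewrite ler_pdivrMr // => /(le_trans _); apply.
  by rewrite ler_norml; apply/andP; split; lra.
elim: n t => [|n IH] t /andP[t0' tT].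
  by rewrite mul0r normr_le0 subr_eq0 => /eqP ->.
rewrite -addn1 natrD mulrDl mul1r; set N := n%:R * h.
have N0 : 0 <= N by rewrite mulr_ge0 // ltW.
move=> htn; have [|far] := leP `|t - t0| N; first by apply: IH; rewrite t0' tT.
have [tt0|tt0] := lerP t0 t.
  move: htn far; rewrite ger0_norm ?subr_ge0 // => htn far.
  have fN : f (t0 + N) = 0.
    by apply: IH; [apply/andP; split; lra | rewrite addrC addKr ger0_norm].
  apply: (ode_sol_zero_near _ fN); rewrite ?t0' ?tT //.
    by apply/andP; split; lra.
  by rewrite -/h ger0_norm; lra.
move: htn far; rewrite ler0_norm ?subr_le0 ?(ltW tt0) // => htn far.
have fN : f (t0 - N) = 0.
  apply: IH; first by apply/andP; split; lra.
  by rewrite addrAC subrr add0r normrN ger0_norm.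
apply: (ode_sol_zero_near _ fN); rewrite ?t0' ?tT //.
  by apply/andP; split; lra.
by rewrite -/h ler0_norm; lra.
Qed.

Lemma ode_sol_sign_stable t0 t : 0 <= t0 <= T -> 0 <= t <= T ->
  f t0 != 0 -> 0 < f t0 * f t.
Proof.
move=> ht0 ht ft0; rewrite ltNge; apply: contra ft0 => fle.
have T0 : 0 <= T by case/andP: ht => /le_trans; apply.
have [c hc fc] := IVT_sign_change (ode_sol_continuous T0 f_ode) ht0 ht fle.
by rewrite (ode_sol_zero hc fc ht0).
Qed.

Lemma ode_sol_ge0 t0 t : 0 <= t0 <= T -> 0 <= t <= T -> 0 <= f t0 -> 0 <= f t.
Proof.
move=> ht0 ht; rewrite le_eqVlt => /orP[/eqP ft0|ft0].
  by rewrite (ode_sol_zero ht0 (esym ft0) ht).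
have := ode_sol_sign_stable ht0 ht (lt0r_neq0 ft0).
by rewrite pmulr_rgt0 // => /ltW.
Qed.

End LinearGrowth.

Section ControlProblem.
Variable R : realType.
Local Notation mu := (@lebesgue_measure R).

Lemma maximizer_slack_le (M a1 a2 l1 l2 : R) : 1 < M -> M < 2 ->
  0 <= a2 <= 1 ->
  (forall b1 b2 : R, 0 <= b1 <= 1 -> 0 <= b2 <= 1 -> b1 + b2 <= M ->
     b1 * l1 + b2 * l2 <= a1 * l1 + a2 * l2) ->
  (1 - a1) * l1 <= `|l2|.
Proof.
move=> M1 M2 /andP[a20 a21] amax.
have l2_ge := ler_norm l2; have l2_le : - l2 <= `|l2| by rewrite -normrN ler_norm.
have [a2_le|a2_gt] := lerP a2 (M - 1).
  have : 1 * l1 + a2 * l2 <= a1 * l1 + a2 * l2.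
    by apply: amax; [rewrite ler01 lexx | rewrite a20 a21 | lra].
  nra.
have : 1 * l1 + (M - 1) * l2 <= a1 * l1 + a2 * l2.
  by apply: amax; [rewrite ler01 lexx | apply/andP; split; lra | lra].
nra.
Qed.

Lemma pmp_rate_l2_le (M xb a1 a2 l1 l2 : R) : 1 < M -> M < 2 -> 0 < xb ->
  0 <= a1 <= 1 -> 0 <= a2 <= 1 -> l2 <= l1 ->
  (forall b1 b2 : R, 0 <= b1 <= 1 -> 0 <= b2 <= 1 -> b1 + b2 <= M ->
     - xb * (a1 * l1 + a2 * l2) <= - xb * (b1 * l1 + b2 * l2)) ->
  `|(1 + a2) / 2 * l2 - (1 - a1) / 2 * l1| <= 2 * `|l2|.
Proof.
move=> M1 M2 xb0 /andP[a10 a11] a2_range l21 amin.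
have /(maximizer_slack_le M1 M2 a2_range) slack : forall b1 b2 : R,
    0 <= b1 <= 1 -> 0 <= b2 <= 1 -> b1 + b2 <= M ->
    b1 * l1 + b2 * l2 <= a1 * l1 + a2 * l2.
  move=> b1 b2 hb1 hb2 hb; have nxb : - xb < 0 by rewrite oppr_lt0.
  by rewrite -(ler_nM2l nxb) amin.
case/andP: a2_range => a20 a21.
have [l2_ge0|l2_lt0] := lerP 0 l2.
  by rewrite ger0_norm // in slack *; rewrite ler_norml; apply/andP; split; nra.
rewrite ltr0_norm // in slack *; rewrite ler_norml; apply/andP; split; nra.
Qed.

Lemma trajectory_xibar_ode (T : R) a1 a2 x10 x20 x1 x2 :
  trajectory T a1 a2 x10 x20 x1 x2 ->
  ode_sol T (xibar x1 x2) (fun s => - ((a1 s + a2 s) / 2) * xibar x1 x2 s).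
Proof.
case=> _ [_ [ode1 ode2]].
apply: eq_ode_sol (ode_sol_lincomb (2^-1) (2^-1) ode1 ode2) => t.
  by rewrite /xibar; ring.
by rewrite /xibar; field.
Qed.

Lemma trajectory_xibar_gt0 (T M : R) a1 a2 x10 x20 x1 x2 :
  admissible T M a1 a2 -> trajectory T a1 a2 x10 x20 x1 x2 ->
  0 < (x10 + x20) / 2 -> forall t, 0 <= t <= T -> 0 < xibar x1 x2 t.
Proof.
move=> [_ [_ a_range]] traj xb0 t ht.
have T0 : 0 <= T by case/andP: ht => /le_trans; apply.
have rate : {ae mu, forall s, 0 <= s <= T ->
    `|- ((a1 s + a2 s) / 2) * xibar x1 x2 s| <= 1 * `|xibar x1 x2 s|}.
  apply: aeW => s hs; have [/andP[? ?] /andP[? ?] _] := a_range s hs.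
  rewrite normrM normrN mul1r [`|_ / 2|]ger0_norm; last lra.
  by apply: ler_piMl; [exact: normr_ge0 | lra].
have h0 : (0 : R) <= 0 <= T by rewrite lexx T0.
have := ode_sol_sign_stable ler01 (trajectory_xibar_ode traj) rate h0 ht.
have [x10e [x20e _]] := traj.
rewrite /xibar x10e x20e -/(xibar x1 x2 t) pmulr_rgt0 //; apply.
exact: lt0r_neq0.
Qed.

Lemma covector_gap_ode (T : R) a1 a2 l1 l2 :
  ode_sol T l1 (fun s => (1 + a1 s) / 2 * l1 s - (1 - a2 s) / 2 * l2 s) ->
  ode_sol T l2 (fun s => (1 + a2 s) / 2 * l2 s - (1 - a1 s) / 2 * l1 s) ->
  ode_sol T (fun s => l1 s - l2 s) (fun s => l1 s - l2 s).
Proof.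
move=> ode1 ode2; apply: eq_ode_sol (ode_sol_lincomb 1 (-1) ode1 ode2) => t.
  by ring.
by field.
Qed.

End ControlProblem.

Theorem proposition7 (R : realType) (T M x10 x20 : R)
    (a1 a2 x1 x2 l1 l2 : R -> R) :
  0 < T -> 1 < M -> M < 2 ->
  0 < (x10 + x20) / 2 -> x20 < x10 ->
  optimal T M x10 x20 a1 a2 x1 x2 ->
  (forall t, 0 <= t <= T -> x2 t <= x1 t) ->
  pmp_covector T M a1 a2 x1 x2 l1 l2 ->
  [/\ (0 < l2 T -> forall t, 0 <= t <= T -> 0 < l1 t /\ 0 < l2 t),
      (l2 T = 0 -> forall t, 0 <= t <= T -> 0 < l1 t /\ l2 t = 0)
    & (l2 T < 0 -> forall t, 0 <= t <= T -> l2 t < 0)].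
Proof.
move=> T_gt0 M_gt1 M_lt2 xb0 _ [adm [traj _]] x21 [ode1 [ode2 [l1T [l2T pmp]]]].
have TT : 0 <= T <= T by rewrite lexx ltW.
have xb_gt0 := trajectory_xibar_gt0 adm traj xb0.
have gap_ode := covector_gap_ode ode1 ode2.
have gap_rate : {ae lebesgue_measure, forall s, 0 <= s <= T ->
    `|l1 s - l2 s| <= 1 * `|l1 s - l2 s|} by apply: aeW => s _; rewrite mul1r.
have l21 t : 0 <= t <= T -> l2 t <= l1 t.
  move=> ht; rewrite -subr_ge0; apply: (ode_sol_ge0 ler01 gap_ode gap_rate TT ht).
  by rewrite l1T l2T subr_ge0 x21.
have l2_rate : {ae lebesgue_measure, forall s, 0 <= s <= T ->
    `|(1 + a2 s) / 2 * l2 s - (1 - a1 s) / 2 * l1 s| <= 2 * `|l2 s|}.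
  apply: ae_impl pmp => s amin hs; have [a1s a2s _] := adm.2.2 s hs.
  exact: pmp_rate_l2_le M_gt1 M_lt2 (xb_gt0 s hs) a1s a2s (l21 s hs) (amin hs).
have l2_stable := ode_sol_sign_stable (ler0n R 2) ode2 l2_rate TT.
split=> [l2T_gt0 t ht | l2T0 t ht | l2T_lt0 t ht].
- have l2t : 0 < l2 t by rewrite -(pmulr_rgt0 _ l2T_gt0) l2_stable ?lt0r_neq0.
  by split; last exact: l2t; apply: lt_le_trans l2t (l21 t ht).
- have l2t := ode_sol_zero (ler0n R 2) ode2 l2_rate TT l2T0 ht.
  have gapT : 0 < l1 T - l2 T.
    by have := xb_gt0 T TT; rewrite /xibar -l1T -l2T l2T0; lra.
  have := ode_sol_sign_stable ler01 gap_ode gap_rate TT ht (lt0r_neq0 gapT).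
  by rewrite pmulr_rgt0 // l2t subr0.
- by rewrite -(nmulr_rgt0 _ l2T_lt0) l2_stable ?ltr0_neq0.
Qed.
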